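(* Let $n\ge 1$, let $C_u(v_1),\ldots,C_u(v_n)>0$ and $R_1,\ldots,R_n>0$ be sustainable, i.e. $R_i\le C_u(v_i)$ for all $i$, $\sum_{j\ne i}R_j\le C_d(v_i)$ for all $i$ (for some downlink capacities $C_d(v_i)>0$), and $(n-1)\sum_{i=1}^n R_i\le\sum_{i=1}^n C_u(v_i)$. Run the algorithm described in the context on these inputs. Then for every $\alpha$ with $1\le\alpha\le n$, $$\sum_{i=1}^n U_i[\alpha] \geq (n-2)\sum_{i=\alpha}^n R_i.$$
   Context: Sub-stream rate assigning algorithm. Input: $n$, uplink capacities $C_u(v_1),\ldots,C_u(v_n)$ and rates $R_1,\ldots,R_n$. Initialize $r_{i,j}:=0$ for all $1\le i,j\le n$ and $U_i := C_u(v_i)-R_i$ for $1\le i\le n$. Outer loop: for $i=1$ to $n$: set $R'_i := R_i$; inner loop: for $j=1$ to $n$: if $(n-2)R'_i > U_j$ then set $r_{i,j} := U_j/(n-2)$, else set $r_{i,j} := R'_i$; then set $U_j := U_j-(n-2)r_{i,j}$ and $R'_i := R'_i - r_{i,j}$; if $R'_i = 0$, exit the inner loop. Output all $r_{i,j}$. Notation: $U_i[\alpha]$ denotes the value of the variable $U_i$ at the start of iteration $\alpha$ of the outer loop. *)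

From HB Require Import structures.
From mathcomp Require Import all_boot all_order all_algebra.
Set Implicit Arguments. Unset Strict Implicit. Unset Printing Implicit Defensive.
Import Order.TTheory GRing.Theory Num.Theory.
Local Open Scope ring_scope.

(* Indices are 0-based: node v_{i+1} of the paper is index i, 0 <= i < n. *)

Section Algo.
Variables (R : realFieldType) (n : nat).

Definition nm2 : R := n%:R - 2.

Definition upd (U : nat -> R) (j : nat) (x : R) : nat -> R :=
  fun k => if k == j then x else U k.

Fixpoint inner_loop (U : nat -> R) (Rp : R) (js : seq nat) : (nat -> R) * R :=
  match js with
  | [::] => (U, Rp)
  | j :: js' =>
      let r := if nm2 * Rp > U j then U j / nm2 else Rp in
      let U' := upd U j (U j - nm2 * r) in
      let Rp' := Rp - r in
      if Rp' == 0 then (U', Rp') else inner_loop U' Rp' js'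
  end.

(* U after k complete iterations of the outer loop (i = 0, ..., k-1),
   starting from U_i := Cu i - Rr i.  Hence U_i[alpha] (paper, alpha 1-based)
   is  U_iter Cu Rr (alpha - 1) (i - 1). *)
Fixpoint U_iter (Cu Rr : nat -> R) (k : nat) : nat -> R :=
  match k with
  | 0 => fun i => Cu i - Rr i
  | k'.+1 => (inner_loop (U_iter Cu Rr k') (Rr k') (iota 0 n)).1
  end.

End Algo.

From HB Require Import structures.
From mathcomp Require Import all_boot all_order all_algebra.
Import Order.TTheory GRing.Theory Num.Theory.
From mathcomp Require Import ring lra.
Local Open Scope ring_scope.

(* Every assignment r_{i,j} removes (n-2) r_{i,j} from U_j, and the r_{i,j}
   of one outer iteration add up to R_i - R'_i <= R_i, since R'_i never
   becomes negative.  So the outer iteration i lowers the total sum of the U_j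
   by at most (n-2) R_i, while the initial sum, sum_i C_u(v_i) - sum_i R_i,
   is at least (n-2) sum_i R_i by the last sustainability condition. *)

Section UploadSums.
Variables (R : realFieldType) (n : nat).

Lemma sumr_upd (U : nat -> R) (j : nat) (x : R) : (j < n)%N ->
  \sum_(0 <= i < n) upd U j x i = \sum_(0 <= i < n) U i + (x - U j).
Proof.
move=> jn.
have jin : j \in index_iota 0 n by rewrite mem_index_iota.
have uniq_iota : uniq (index_iota 0 n) by rewrite iota_uniq.
rewrite (bigD1_seq j jin uniq_iota) [in RHS](bigD1_seq j jin uniq_iota) /= /upd eqxx.
rewrite (eq_bigr U) => [|i /negbTE -> //].
ring.
Qed.

Lemma sum_inner_loop (U : nat -> R) (Rp : R) (js : seq nat) :
  all (fun j => (j < n)%N) js ->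
  \sum_(0 <= i < n) (inner_loop n U Rp js).1 i =
  \sum_(0 <= i < n) U i - nm2 R n * (Rp - (inner_loop n U Rp js).2).
Proof.
elim: js U Rp => [|j js IHjs] U Rp /=; first by rewrite subrr mulr0 subr0.
case/andP=> jn js_lt_n.
set r := if U j < _ then _ else _.
case: (Rp - r =P 0) => [/subr0_eq Rp_r | _] /=.
  by rewrite sumr_upd // Rp_r subrr; ring.
by rewrite IHjs // sumr_upd //; ring.
Qed.

Lemma inner_loop_residual_ge0 (U : nat -> R) (Rp : R) (js : seq nat) :
  0 <= nm2 R n -> 0 <= Rp -> 0 <= (inner_loop n U Rp js).2.
Proof.
move=> nm2_ge0; elim: js U Rp => [|j js IHjs] U Rp //= Rp_ge0.
set r := if U j < _ then _ else _.
have r_le_Rp : 0 <= Rp - r.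
  rewrite /r; case: ifP => [U_lt|_]; last by rewrite subrr.
  (* for n = 2 the assigned rate U_j / (n-2) is the junk value U_j / 0 = 0 *)
  have [->|nm2_neq0] := eqVneq (nm2 R n) 0; first by rewrite invr0 mulr0 subr0.
  have nm2_gt0 : 0 < nm2 R n by rewrite lt_def nm2_neq0.
  by rewrite subr_ge0 ler_pdivrMr // mulrC ltW.
by case: (Rp - r =P 0) => _ //=; apply: IHjs.
Qed.

Lemma sum_U_iter_succ_ge (Cu Rr : nat -> R) (k : nat) :
  0 <= nm2 R n -> 0 <= Rr k ->
  \sum_(0 <= i < n) U_iter n Cu Rr k.+1 i >=
  \sum_(0 <= i < n) U_iter n Cu Rr k i - nm2 R n * Rr k.
Proof.
move=> nm2_ge0 Rr_ge0 /=.
rewrite sum_inner_loop; last by apply/allP => j; rewrite mem_iota.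
have := inner_loop_residual_ge0 (U_iter n Cu Rr k) (Rr k) (iota 0 n) nm2_ge0 Rr_ge0.
move: (inner_loop _ _ _ _).2 => res res_ge0.
by rewrite lerB // ler_wpM2l // gerBl.
Qed.

Lemma sum_U_iter_ge (Cu Rr : nat -> R) (k : nat) :
  0 <= nm2 R n -> (forall i, (i < k)%N -> 0 <= Rr i) ->
  \sum_(0 <= i < n) U_iter n Cu Rr k i >=
  \sum_(0 <= i < n) U_iter n Cu Rr 0 i - nm2 R n * \sum_(0 <= i < k) Rr i.
Proof.
move=> nm2_ge0; elim: k => [|k IHk] Rr_ge0.
  by rewrite [X in _ * X]big_geq // mulr0 subr0.
rewrite big_nat_recr //= mulrDr opprD addrA.
apply: le_trans (sum_U_iter_succ_ge Cu Rr k nm2_ge0 (Rr_ge0 k (ltnSn k))).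
by rewrite lerB // IHk // => i /ltnW; apply: Rr_ge0.
Qed.

End UploadSums.

Theorem propositionB2 (R : realFieldType) (n : nat) (Cu Cd Rr : nat -> R) :
  (1 <= n)%N ->
  (forall i, (i < n)%N -> 0 < Cu i) ->
  (forall i, (i < n)%N -> 0 < Cd i) ->
  (forall i, (i < n)%N -> 0 < Rr i) ->
  (forall i, (i < n)%N -> Rr i <= Cu i) ->
  (forall i, (i < n)%N -> \sum_(0 <= j < n | j != i) Rr j <= Cd i) ->
  (n%:R - 1) * (\sum_(0 <= i < n) Rr i) <= \sum_(0 <= i < n) Cu i ->
  forall alpha : nat, (1 <= alpha <= n)%N ->
    \sum_(0 <= i < n) U_iter n Cu Rr alpha.-1 i
      >= (n%:R - 2) * \sum_(alpha.-1 <= i < n) Rr i.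
Proof.
move=> _ _ _ Rr_gt0 _ _ total_le alpha /andP [alpha_ge1 alpha_le_n].
set k := alpha.-1; have k_lt_n : (k < n)%N by rewrite prednK.
have initial_ge : (n%:R - 2) * \sum_(0 <= i < n) Rr i <=
                  \sum_(0 <= i < n) U_iter n Cu Rr 0 i.
  by rewrite /= sumrB; lra.
have [k0 | k_gt0] := posnP k; first by rewrite k0.
have nm2_ge0 : 0 <= nm2 R n.
  by rewrite subr_ge0 (ler_nat R 2 n) (leq_ltn_trans k_gt0 k_lt_n).
have Rr_ge0 i : (i < k)%N -> 0 <= Rr i.
  by move=> /ltn_trans /(_ k_lt_n) /Rr_gt0 /ltW.
apply: le_trans (@sum_U_iter_ge R n Cu Rr k nm2_ge0 Rr_ge0).
by rewrite lerBrDr addrC -mulrDr -big_cat_nat // ltnW.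
Qed.
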